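(* Let $\lambda<0$ and let $p(x;\theta)=(1+\lambda\,\theta\cdot F(x))_+^{1/\lambda}e^{-\varphi(\theta)}$, $\theta\in\Theta\subset\mathbb{R}^d$, be a $\lambda$-exponential family satisfying the standing assumptions described in the context. Let $x_1,\ldots,x_n\in\mathcal{S}$ be data points, $y_i=F(x_i)$, and let $$\ell(\theta)=\sum_{i=1}^n\Big(\tfrac{1}{\lambda}\log(1+\lambda\,\theta\cdot y_i)-\varphi(\theta)\Big)$$ be the log-likelihood. Given $\theta(0)\in\Theta$, define the fixed-point iteration, for $k\ge 0$, $$\eta(k+1):=\sum_{i=1}^n w_i(\theta(k))\,y_i,\qquad \theta(k+1):=\nabla^{(\lambda)}\psi(\eta(k+1)),$$ where $w_i(\theta):=\dfrac{1/(1+\lambda\,\theta\cdot y_i)}{\sum_{j=1}^n 1/(1+\lambda\,\theta\cdot y_j)}$, and set $\eta(0)=\nabla^{(\lambda)}\varphi(\theta(0))$. Then for every $k\ge0$, $\ell(\theta(k+1))>\ell(\theta(k))$ unless $\theta(k)$ already satisfies the fixed-point condition $\nabla^{(\lambda)}\varphi(\theta(k))=\sum_{i=1}^n w_i(\theta(k))\,y_i$.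
   Context: Setting: $\mathcal{X}$ is a state space with reference measure $\nu$, $F=(F_1,\ldots,F_d):\mathcal{X}\to\mathbb{R}^d$ is a vector of statistics, $z_+=\max\{z,0\}$, and $\varphi(\theta)$ is defined by the normalization $\int_{\mathcal{X}}p(x;\theta)\,d\nu(x)=1$. The $\lambda$-gradient of a differentiable function $f$ is $\nabla^{(\lambda)}f(\theta):=\nabla f(\theta)/(1-\lambda\nabla f(\theta)\cdot\theta)$. Standing assumptions: $\lambda<0$; $\Theta=\{\theta\in\mathbb{R}^d:\int(1+\lambda\theta\cdot F(x))_+^{1/\lambda}d\nu(x)<\infty\}$ is the natural parameter set; the family satisfies the regularity condition of Wong and Zhang (2022, Condition III.10), under which $\varphi$ is differentiable on $\Theta$ with $1-\lambda\nabla\varphi(\theta)\cdot\theta>0$, the dual potential $\psi(\eta):=\sup_{\theta'\in\Theta}\{\frac1\lambda\log(1+\lambda\theta'\cdot\eta)-\varphi(\theta')\}$ (the $\lambda$-conjugate of $\varphi$) is such that $\frac1\lambda(e^{\lambda\psi}-1)$ is strictly convex on $\Xi$, and $\nabla^{(\lambda)}\varphi:\Theta\to\Xi$ is a diffeomorphism with inverse $\nabla^{(\lambda)}\psi$; moreover the dual parameter set $\Xi:=\nabla^{(\lambda)}\varphi(\Theta)$ is convex and contains the common support $\mathcal{S}:=\{x\in\mathcal{X}:p(x;\theta)>0\}$ of the family (so the iterates are well defined, with $\eta(k)\in\Xi$, $\theta(k)\in\Theta$). *)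

From HB Require Import structures.
From mathcomp Require Import all_boot all_order all_algebra.
From mathcomp Require Import all_classical all_reals all_analysis.
Set Implicit Arguments. Unset Strict Implicit. Unset Printing Implicit Defensive.
Import Order.TTheory GRing.Theory Num.Theory.
Import numFieldNormedType.Exports.
Local Open Scope classical_set_scope.
Local Open Scope ring_scope.

Section LambdaExp.
Variable R : realType.
Variable d : nat.
Local Notation V := 'rV[R]_d.

Definition vdot (u v : V) : R := \sum_(i < d) u ord0 i * v ord0 i.

Definition grad (f : V -> R) (t : V) : V :=
  \row_(i < d) 'D_(delta_mx ord0 i : V) f t.

Definition lgrad (lam : R) (f : V -> R) (t : V) : V :=
  (1 - lam * vdot (grad f t) t)^-1 *: grad f t.

(* z_+ ^ (1/lambda), with 0 ^ (1/lambda) = 0 (powR convention) *)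
Definition lam_kernel (lam : R) (t y : V) : R :=
  powR (Num.max (1 + lam * vdot t y) 0) lam^-1.

Section Measure.
Context {dX : measure_display} {X : measurableType dX}.
Variable nu : {measure set X -> \bar R}.
Variable F : X -> V.
Variable lam : R.

Definition Theta : set V :=
  [set t | (\int[nu]_x (lam_kernel lam t (F x))%:E < +oo)%E].

Definition phi (t : V) : R := ln (fine (\int[nu]_x (lam_kernel lam t (F x))%:E)).

Definition pdens (x : X) (t : V) : R := lam_kernel lam t (F x) * expR (- phi t).

Definition psi_set (e : V) : set R :=
  [set lam^-1 * ln (1 + lam * vdot t' e) - phi t' |
     t' in [set t' | Theta t' /\ 0 < 1 + lam * vdot t' e]].

Definition psi (e : V) : R := sup (psi_set e).

Definition Xi : set V := lgrad lam phi @` Theta.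

Definition Supp : set X := [set x | exists2 t, Theta t & 0 < pdens x t].

Definition loglik n (y : 'I_n -> V) (t : V) : R :=
  \sum_(i < n) (lam^-1 * ln (1 + lam * vdot t (y i)) - phi t).

Definition weight n (y : 'I_n -> V) (t : V) (i : 'I_n) : R :=
  (1 + lam * vdot t (y i))^-1 / \sum_(j < n) (1 + lam * vdot t (y j))^-1.

End Measure.

Definition convex_set_on (A : set V) : Prop :=
  forall a b, A a -> A b -> forall s : R, 0 <= s <= 1 ->
    A (s *: a + (1 - s) *: b).

Definition strictly_convex_on (A : set V) (g : V -> R) : Prop :=
  forall a b, A a -> A b -> a != b -> forall s : R, 0 < s < 1 ->
    g (s *: a + (1 - s) *: b) < s * g a + (1 - s) * g b.

End LambdaExp.

(* Write c(t, e) = lam^-1 ln (1 + lam t.e) ([lcost]), eta_of = lgrad phi and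
   theta_of = lgrad psi.  The identities grad phi t = eta_of t / (1 + lam t.eta_of t)
   and its dual for psi make the Fenchel-Young gap
   phi (theta_of e) + psi e - c(theta_of e, e) stationary along segments of Xi, so it
   is constant; concavity of exp (lam psi) then bounds the supremum psi e of
   c(t, e) - phi t by psi e minus that constant, so the gap vanishes.  Strict
   concavity makes the Fenchel-Young inequality c(t, e) - phi t <= psi e strict unless
   e = eta_of t.
   For one step t -> t' = theta_of eta with eta = sum_i w_i y_i, the ratio
   (1 + lam t'.eta) / (1 + lam t.eta) is the mean of the ratios
   (1 + lam t'.y_i) / (1 + lam t.y_i), so concavity of ln gives
   l(t') - l(t) >= n [c(t', eta) - phi t' - (c(t, eta) - phi t)]
               = n [psi eta - (c(t, eta) - phi t)],
   which is positive unless eta = eta_of t. *)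

From Pilot Require Import Defs.
From HB Require Import structures.
From mathcomp Require Import all_boot all_order all_algebra.
From mathcomp Require Import all_classical all_reals all_analysis.
From mathcomp Require Import ring lra.
Set Implicit Arguments.
Unset Strict Implicit.
Import Order.TTheory GRing.Theory Num.Theory.
Import numFieldNormedType.Exports.
Local Open Scope classical_set_scope.
Local Open Scope ring_scope.

Section RowDot.
Context {R : realType} {d : nat}.
Local Notation V := 'rV[R]_d.

Lemma vdotC (u v : V) : vdot u v = vdot v u.
Proof. by apply: eq_bigr => i _; rewrite mulrC. Qed.

Lemma vdotZl k (u v : V) : vdot (k *: u) v = k * vdot u v.
Proof. by rewrite /vdot mulr_sumr; apply: eq_bigr => i _; rewrite mxE mulrA. Qed.

Lemma vdotZr k (u v : V) : vdot u (k *: v) = k * vdot u v.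
Proof. by rewrite vdotC vdotZl vdotC. Qed.

Lemma vdotDr (u v w : V) : vdot u (v + w) = vdot u v + vdot u w.
Proof. by rewrite /vdot -big_split; apply: eq_bigr => i _; rewrite mxE mulrDr. Qed.

Lemma vdotBr (u v w : V) : vdot u (v - w) = vdot u v - vdot u w.
Proof. by rewrite /vdot -sumrB; apply: eq_bigr => i _; rewrite !mxE mulrBr. Qed.

Lemma vdot_sumr n (u : V) (w : 'I_n -> R) (y : 'I_n -> V) :
  vdot u (\sum_(i < n) w i *: y i) = \sum_(i < n) w i * vdot u (y i).
Proof.
rewrite /vdot; under eq_bigr do rewrite summxE mulr_sumr.
rewrite exchange_big /=; apply: eq_bigr => i _.
by rewrite mulr_sumr; apply: eq_bigr => j _; rewrite mxE mulrCA.
Qed.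

End RowDot.

Section LineCalculus.
Context {R : realType} {d : nat}.
Local Notation V := 'rV[R]_d.

Lemma diff_vdot_grad (f : V -> R) x w : differentiable f x ->
  'd f x w = vdot (grad f x) w.
Proof.
move=> df; rewrite {1}(row_sum_delta w) linear_sum; apply: eq_bigr => j _.
by rewrite linearZ /= -deriveE // mxE mulrC.
Qed.

Lemma is_derive_comp_grad (f : V -> R) (p : R -> V) s :
  differentiable p s -> differentiable f (p s) ->
  is_derive s 1 (f \o p) (vdot (grad f (p s)) ('D_1 p s)).
Proof.
move=> dp df; have dfp : differentiable (f \o p) s by exact: differentiable_comp.
apply: is_derive_eq; first exact/derivableP/diff_derivable.
by rewrite deriveE // diff_comp // /= diff_vdot_grad // -deriveE.
Qed.

Lemma is_derive_vdot (p q : R -> V) s :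
  differentiable p s -> differentiable q s ->
  is_derive s 1 (fun t => vdot (p t) (q t))
    (vdot ('D_1 p s) (q s) + vdot (p s) ('D_1 q s)).
Proof.
move=> dp dq.
have coord (r : R -> V) k : differentiable r s ->
    is_derive s 1 (fun t => r t ord0 k) (('D_1 r s) ord0 k).
  move=> dr; have {}dr : derivable r s 1 by exact: diff_derivable.
  rewrite derive_mx // mxE.
  by apply: derivableP; move/derivable_mxP : dr => /(_ ord0 k).
have -> : (fun t => vdot (p t) (q t)) = \sum_(k < d) (fun t => p t ord0 k * q t ord0 k).
  by apply: funext => t; rewrite /vdot fct_sumE.
apply: is_derive_eq.
  apply: is_derive_sum => k.
  exact: is_deriveM (coord p k dp) (coord q k dq).
rewrite /vdot -big_split /=; apply: eq_bigr => k _.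
by rewrite /GRing.scale /= addrC mulrC [X in _ + X]mulrC.
Qed.

Lemma is_derive_line (a v : V) (s : R) : is_derive s 1 (fun t : R => a + t *: v) v.
Proof.
have dZ : is_derive s 1 (fun t : R => t *: v) v.
  have dv : differentiable (fun t : R => t *: v) s by exact: ex_diff.
  apply: DeriveDef; first exact: diff_derivable.
  by rewrite deriveE // diff_val scale1r.
have := is_deriveD (is_derive_cst a s 1) dZ; rewrite add0r; exact.
Qed.

Lemma differentiable_line (a v : V) (s : R) : differentiable (fun t : R => a + t *: v) s.
Proof. exact/derivable1_diffP/(@ex_derive _ _ _ _ _ _ _ (is_derive_line a v s)). Qed.

Lemma derive_line (a v : V) (s : R) : 'D_1 (fun t : R => a + t *: v) s = v.
Proof. exact: (@derive_val _ _ _ _ _ _ _ (is_derive_line a v s)). Qed.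

End LineCalculus.

Section RealFacts.
Context {R : realType}.

Lemma psumr_gt0 n (r : 'I_n -> R) : (0 < n)%N -> (forall i, 0 < r i) ->
  0 < \sum_i r i.
Proof.
case: n r => // n r _ r_gt0; rewrite big_ord_recl ltr_pwDl //.
by apply: sumr_ge0 => i _; exact: ltW.
Qed.

Lemma sum_ln_le_ln_mean n (r : 'I_n -> R) : (0 < n)%N -> (forall i, 0 < r i) ->
  \sum_i ln (r i) <= n%:R * ln ((\sum_i r i) / n%:R).
Proof.
move=> n_gt0 r_gt0; set m := (\sum_i r i) / n%:R.
have n_neq0 : n%:R != 0 :> R by rewrite pnatr_eq0 -lt0n.
have m_gt0 : 0 < m by rewrite divr_gt0 ?ltr0n ?psumr_gt0.
have ln_le i : ln (r i) - ln m <= r i / m - 1.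
  rewrite -ln_div ?posrE // -[X in ln X](subrK 1) addrC le_ln1Dx //.
  by rewrite ltrBrDl subrr divr_gt0.
have : \sum_i (ln (r i) - ln m) <= 0.
  apply: le_trans (ler_sum _ (fun i _ => ln_le i)) _.
  have sum_neq0 : \sum_i r i != 0 by rewrite gt_eqF ?psumr_gt0.
  by rewrite sumrB -mulr_suml sumr_const card_ord invfM invrK mulrA divff ?mul1r ?subrr.
by rewrite sumrB subr_le0 sumr_const card_ord mulr_natl.
Qed.

Lemma derive1_eq0_except_eq (f : R -> R) (x y c : R) : x <= y ->
  (forall s, x <= s -> s <= y -> derivable f s 1) ->
  (forall s, x < s -> s < y -> s != c -> 'D_1 f s = 0) -> f x = f y.
Proof.
move=> xy df f'0.
have seg a b : x <= a -> a <= b -> b <= y ->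
    (forall s, a < s -> s < b -> 'D_1 f s = 0) -> f a = f b.
  move=> xa ab by' f'ab0; case: (ltgtP a b) ab => // [ab _ | -> //].
  have [s] : exists2 s, s \in `]a, b[ & f b - f a = 'D_1 f s * (b - a).
    apply: (MVT ab) => [s|].
      by rewrite in_itv /= => /andP[? ?]; apply/derivableP/df; lra.
    apply: derivable_within_continuous => s.
    by rewrite in_itv /= => /andP[? ?]; apply: df; lra.
  rewrite in_itv /= => /andP[a_s s_b]; rewrite f'ab0 // mul0r => /eqP.
  by rewrite subr_eq0 => /eqP.
have [/andP[xc cy]|c_out] := boolP (x < c < y).
  rewrite (seg x c) ?lexx ?ltW // => [|s xs sc]; last by apply: f'0; [lra|lra|rewrite lt_eqF].
  by apply: seg; rewrite ?lexx ?ltW // => s cs sy; apply: f'0; [lra|lra|rewrite gt_eqF].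
apply: seg => // s xs sy; apply: f'0 => //.
by apply: contraNneq c_out => <-; rewrite xs sy.
Qed.

Lemma chord_le_derive (Q : R -> R) (D : R) : is_derive (0 : R) 1 Q D ->
  (forall u, 0 < u < 1 -> u * (Q 1 - Q 0) <= Q u - Q 0) -> Q 1 - Q 0 <= D.
Proof.
move=> dQ chord; rewrite -(@derive_val _ _ _ _ _ _ _ dQ).
have : (fun h : R => h^-1 *: ((Q \o shift 0) (h *: 1) - Q 0)) @ 0^' --> 'D_1 Q 0.
  exact: (@ex_derive _ _ _ _ _ _ _ dQ).
move/cvg_dnbhs_at_right/cvgr_to_ge; apply; near=> h.
have h_gt0 : 0 < h by near: h; exact: nbhs_right_gt.
have h_lt1 : h < 1 by near: h; exact: nbhs_right_lt ltr01.
have -> : (Q \o shift 0) (h *: 1) = Q h by rewrite /comp [shift _ _]addr0 [h *: 1]mulr1.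
rewrite [_ *: _]/(h^-1 * _) ler_pdivlMl //.
by apply: chord; rewrite h_gt0 h_lt1.
Unshelve. all: by end_near.
Qed.

Lemma ler_div_tangent (qa qe la l x : R) : 0 < la -> 0 < la + l * x ->
  qe - qa <= qa * (l * (la^-1 * x)) -> qe / (la + l * x) <= qa / la.
Proof.
move=> la_gt0 lx_gt0 /(ler_wpM2r (ltW la_gt0)).
have -> : qa * (l * (la^-1 * x)) * la = qa * (l * x) by field; rewrite gt_eqF.
by rewrite ler_pdivrMr // mulrAC ler_pdivlMr //; lra.
Qed.

Lemma ltr_div_conv (u qa qb qm la lb : R) : 0 < u < 1 -> 0 < la -> 0 < lb ->
  qa / la <= qb / lb -> u * qb + (1 - u) * qa < qm ->
  qa / la < qm / (u * lb + (1 - u) * la).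
Proof.
move=> /andP[u_gt0 u_lt1] la_gt0 lb_gt0 le_ab lt_m.
have l_gt0 : 0 < u * lb + (1 - u) * la by rewrite addr_gt0 ?mulr_gt0 ?subr_gt0.
rewrite ltr_pdivlMr //; apply: le_lt_trans lt_m.
have qb_ge : qa / la * lb <= qb by rewrite -ler_pdivlMr.
have -> : qa / la * (u * lb + (1 - u) * la) = u * (qa / la * lb) + (1 - u) * qa.
  by field; rewrite gt_eqF.
by rewrite lerD2r ler_pM2l.
Qed.

End RealFacts.

Section NegativeLambda.
Context {R : realType}.
Variable lam : R.
Hypothesis lam_lt0 : lam < 0.

Let sub_lam_ln x L : 0 < L -> x - lam^-1 * ln L = lam^-1 * ln (expR (lam * x) / L).
Proof.
move=> L_gt0; rewrite ln_div ?posrE ?expR_gt0 // expRK mulrBr mulrA.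
by rewrite mulVf ?mul1r // lt_eqF.
Qed.

Lemma ler_sub_lam_ln x1 x2 L1 L2 : 0 < L1 -> 0 < L2 ->
  (x1 - lam^-1 * ln L1 <= x2 - lam^-1 * ln L2) =
  (expR (lam * x2) / L2 <= expR (lam * x1) / L1).
Proof.
move=> L1_gt0 L2_gt0; rewrite !sub_lam_ln // ler_nM2l ?invr_lt0 //.
by rewrite ler_ln // posrE divr_gt0 ?expR_gt0.
Qed.

Lemma ltr_sub_lam_ln x1 x2 L1 L2 : 0 < L1 -> 0 < L2 ->
  (x1 - lam^-1 * ln L1 < x2 - lam^-1 * ln L2) =
  (expR (lam * x2) / L2 < expR (lam * x1) / L1).
Proof. by move=> L1_gt0 L2_gt0; rewrite !ltNge ler_sub_lam_ln. Qed.

End NegativeLambda.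

Section ConvexCombination.
Context {R : realType} {d : nat}.
Local Notation V := 'rV[R]_d.

Lemma convex_set_on_sum (A : set V) n (w : 'I_n -> R) (y : 'I_n -> V) :
  convex_set_on A -> (forall i, 0 < w i) -> \sum_i w i = 1 ->
  (forall i, A (y i)) -> A (\sum_i w i *: y i).
Proof.
move=> A_conv; elim: n w y => [|n IH] w y w_gt0 w1 Ay.
  by move: w1; rewrite big_ord0 => /esym/eqP; rewrite oner_eq0.
pose w' i := w (widen_ord (leqnSn n) i); pose y' i := y (widen_ord (leqnSn n) i).
rewrite big_ord_recr /= -/(\sum_i w' i *: y' i).
move: w1; rewrite big_ord_recr /= -/(\sum_i w' i); set W := \sum_i w' i => w1.
have W_ge0 : 0 <= W by apply: sumr_ge0 => i _; exact/ltW/w_gt0.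
have [W0|W_gt0] := eqVneq W 0.
  have w'0 i : w' i = 0 by apply: (psumr_eq0P _ W0) => // j _; exact/ltW/w_gt0.
  move: w1; rewrite W0 add0r big1 ?add0r => [->|i _]; first by rewrite scale1r.
  by rewrite w'0 scale0r.
have {}W_gt0 : 0 < W by rewrite lt_def W_gt0.
have Anorm : A (\sum_i (w' i / W) *: y' i).
  apply: IH => [i||i]; first exact: divr_gt0 (w_gt0 _) W_gt0.
    by rewrite -mulr_suml divff ?gt_eqF.
  exact: Ay.
have wlast : 1 - W = w ord_max by rewrite -w1 addrAC subrr add0r.
have := A_conv _ _ Anorm (Ay ord_max) W.
rewrite wlast scaler_sumr (eq_bigr (fun i => w' i *: y' i)) => [|i _]; last first.
  by rewrite scalerA mulrCA divff ?gt_eqF // mulr1.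
by apply; rewrite W_ge0 /= -w1 lerDl ltW.
Qed.

End ConvexCombination.

Section LambdaGradient.
Context {R : realType} {d : nat}.
Local Notation V := 'rV[R]_d.
Variable lam : R.

Definition lpair (t e : V) : R := 1 + lam * vdot t e.

Definition lcost (t e : V) : R := lam^-1 * ln (lpair t e).

Lemma lpairC (t e : V) : lpair t e = lpair e t.
Proof. by rewrite /lpair vdotC. Qed.

Lemma lpair_sum n (t : V) (w : 'I_n -> R) (y : 'I_n -> V) : \sum_i w i = 1 ->
  lpair t (\sum_i w i *: y i) = \sum_i w i * lpair t (y i).
Proof.
move=> w1; rewrite /lpair vdot_sumr; under [RHS]eq_bigr do rewrite mulrDr mulr1.
by rewrite big_split /= w1 mulr_sumr; congr (_ + _); apply: eq_bigr => i _; ring.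
Qed.

Lemma lpair_conv (t a b : V) u :
  lpair t (u *: b + (1 - u) *: a) = u * lpair t b + (1 - u) * lpair t a.
Proof. by rewrite /lpair vdotDr !vdotZr; ring. Qed.

Section Gradient.
Variables (f : V -> R) (t : V).
Let D := 1 - lam * vdot (grad f t) t.

Lemma lpair_lgrad : D != 0 -> lpair t (lgrad lam f t) = D^-1.
Proof.
move=> D_neq0; rewrite /lpair /lgrad -/D vdotZr vdotC.
by move: D_neq0; rewrite /D => D_neq0; field.
Qed.

Lemma grad_lgrad : D != 0 ->
  grad f t = (lpair t (lgrad lam f t))^-1 *: lgrad lam f t.
Proof.
by move=> D_neq0; rewrite lpair_lgrad // invrK /lgrad -/D scalerA divff ?scale1r.
Qed.

(* [lgrad] divides by [D], so it returns the junk value 0 where [D] vanishes. *)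
Lemma lgrad_eq0 : D = 0 -> lgrad lam f t = 0.
Proof. by rewrite /lgrad -/D => ->; rewrite invr0 scale0r. Qed.

End Gradient.

End LambdaGradient.

Section LambdaDuality.
Context (R : realType) (d : nat) (dX : measure_display) (X : measurableType dX)
  (nu : {measure set X -> \bar R}) (F : X -> 'rV[R]_d) (lam : R).
Local Notation V := 'rV[R]_d.
Local Notation Theta := (Defs.Theta nu F lam).
Local Notation Xi := (Defs.Xi nu F lam).
Local Notation phi := (Defs.phi nu F lam).
Local Notation psi := (Defs.psi nu F lam).
Local Notation eta_of := (lgrad lam phi).
Local Notation theta_of := (lgrad lam psi).
Local Notation lpair := (lpair lam).
Local Notation lcost := (lcost lam).

Hypothesis lam_lt0 : lam < 0.
Hypothesis phi_diff : forall t, Theta t -> differentiable phi t.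
Hypothesis phi_den_gt0 : forall t, Theta t -> 0 < 1 - lam * vdot (grad phi t) t.
Hypothesis psi_set_bounded : forall e, Xi e ->
  has_ubound (psi_set nu F lam e) /\ psi_set nu F lam e !=set0.
Hypothesis psi_diff : forall e, Xi e -> differentiable psi e.
Hypothesis psi_sconv :
  strictly_convex_on Xi (fun e => lam^-1 * (expR (lam * psi e) - 1)).
Hypothesis theta_ofK : forall t, Theta t -> theta_of (eta_of t) = t.
Hypothesis theta_of_diff : forall e, Xi e -> differentiable theta_of e.
Hypothesis Xi_convex : convex_set_on Xi.

Definition psi_den (e : V) : R := 1 - lam * vdot (grad psi e) e.

Definition fy_gap (e : V) : R := phi (theta_of e) + psi e - lcost (theta_of e) e.

Lemma Xi_eta_of t : Theta t -> Xi (eta_of t).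
Proof. by exists t. Qed.

Lemma Theta_theta_of e : Xi e -> Theta (theta_of e).
Proof. by case=> t Tt <-; rewrite theta_ofK. Qed.

Lemma eta_ofK e : Xi e -> eta_of (theta_of e) = e.
Proof. by case=> t Tt <-; rewrite theta_ofK. Qed.

Lemma lpair_eta_of_gt0 t : Theta t -> 0 < lpair t (eta_of t).
Proof. by move=> Tt; rewrite lpair_lgrad ?invr_gt0 ?phi_den_gt0 ?gt_eqF ?phi_den_gt0. Qed.

Lemma grad_phiE t : Theta t -> grad phi t = (lpair t (eta_of t))^-1 *: eta_of t.
Proof. by move=> Tt; rewrite -grad_lgrad // gt_eqF ?phi_den_gt0. Qed.

Lemma lpair_theta_of_gt0 e : Xi e -> 0 < lpair (theta_of e) e.
Proof. by move=> Xe; have := lpair_eta_of_gt0 (Theta_theta_of Xe); rewrite eta_ofK. Qed.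

Lemma grad_psiE e : psi_den e != 0 ->
  grad psi e = (lpair (theta_of e) e)^-1 *: theta_of e.
Proof. by move=> den; rewrite lpairC -grad_lgrad; [|exact: den]. Qed.

Lemma psi_den_eq0_uniq a b : Xi a -> Xi b -> psi_den a = 0 -> psi_den b = 0 -> a = b.
Proof.
move=> Xa Xb /lgrad_eq0 Ta0 /lgrad_eq0 Tb0.
by rewrite -(eta_ofK Xa) -(eta_ofK Xb) Ta0 Tb0.
Qed.

Lemma fenchel_young_le t e : Theta t -> Xi e -> 0 < lpair t e ->
  lcost t e - phi t <= psi e.
Proof.
move=> Tt Xe Lte; have [ub ne] := psi_set_bounded Xe.
by apply: sup_upper_bound; [split | exists t].
Qed.

Lemma fy_gap_ge0 e : Xi e -> 0 <= fy_gap e.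
Proof.
move=> Xe; have := fenchel_young_le (Theta_theta_of Xe) Xe (lpair_theta_of_gt0 Xe).
by rewrite /fy_gap subr_ge0 lerBlDl.
Qed.


Lemma is_derive_fy_gap_line (a v : V) (s : R) : Xi (a + s *: v) ->
  exists2 D, is_derive s 1 (fun r => fy_gap (a + r *: v)) D &
             (psi_den (a + s *: v) != 0 -> D = 0).
Proof.
set l := fun r : R => a + r *: v => Xe.
have Tt := Theta_theta_of Xe; have eK := eta_ofK Xe.
have dl : differentiable l s := differentiable_line a v s.
have dTl : differentiable (theta_of \o l) s.
  exact: differentiable_comp dl (theta_of_diff Xe).
have dphi := is_derive_comp_grad dTl (phi_diff Tt).
have dpsi := is_derive_comp_grad dl (psi_diff Xe).
have dvdot := is_derive_vdot dTl dl.
rewrite derive_line in dpsi dvdot.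
set Lf := fun r => lpair (theta_of (l r)) (l r).
have dL : is_derive s 1 Lf
    (lam * (vdot ('D_1 (theta_of \o l) s) (l s) + vdot (theta_of (l s)) v)).
  by have := is_deriveD (is_derive_cst (1 : R) s 1) (is_deriveZ lam dvdot); rewrite add0r.
have Lf_gt0 : 0 < Lf s := lpair_theta_of_gt0 Xe.
have dlnL := is_derive1_comp (is_derive1_ln Lf_gt0) dL.
have -> : (fun r => fy_gap (l r)) =
    (phi \o (theta_of \o l)) + (psi \o l) - lam^-1 \*: ((@ln R) \o Lf) by [].
eexists; first exact: is_deriveB (is_deriveD dphi dpsi) (is_deriveZ lam^-1 dlnL).
move=> den; rewrite grad_psiE // grad_phiE // eK -/(Lf s) /comp.
set T := theta_of (l s); set T' := 'D_1 _ s; clearbody T T'.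
have L_neq0 : Lf s != 0 by rewrite gt_eqF.
rewrite !vdotZl (vdotC (l s)) /GRing.scale /=.
by field; rewrite L_neq0 lt_eqF.
Qed.

Lemma fy_gap_const a b : Xi a -> Xi b -> fy_gap a = fy_gap b.
Proof.
move=> Xa Xb; have [-> //|ab] := eqVneq a b.
pose l r := a + r *: (b - a).
have Xl r : 0 <= r -> r <= 1 -> Xi (l r).
  have -> : l r = r *: b + (1 - r) *: a.
    by rewrite /l scalerBr scalerBl scale1r addrC -!addrA [- _ + _]addrC.
  by move=> r0 r1; apply: Xi_convex => //; rewrite r0 r1.
have l_inj r r' : l r = l r' -> r = r'.
  move/addrI/eqP; rewrite -subr_eq0 -scalerBl scaler_eq0 !subr_eq0 [b == a]eq_sym.
  by rewrite (negbTE ab) orbF => /eqP.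
have dfy r : 0 <= r -> r <= 1 -> derivable (fy_gap \o l) r 1.
  move=> r0 r1; have [D dD _] := is_derive_fy_gap_line (Xl r r0 r1).
  exact: (@ex_derive _ _ _ _ _ _ _ dD).
have dfy0 r : 0 < r -> r < 1 -> psi_den (l r) != 0 -> 'D_1 (fy_gap \o l) r = 0.
  move=> r0 r1; have [D dD D0] := is_derive_fy_gap_line (Xl r (ltW r0) (ltW r1)).
  by rewrite (@derive_val _ _ _ _ _ _ _ dD).
have [l1 l0] : l 1 = b /\ l 0 = a by rewrite /l scale1r scale0r addr0 addrC subrK.
rewrite -l1 -{1}l0.
(* [psi_den] vanishes at most once on the segment (where [theta_of] is 0), so the
   derivative of [fy_gap] along it vanishes except at one point. *)
have [[c /andP[c0 c1] den_c]|no_c] := pselect (exists2 c, 0 < c < 1 & psi_den (l c) = 0).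
  apply: (@derive1_eq0_except_eq _ (fy_gap \o l) 0 1 c ler01 dfy) => r r0 r1 rc.
  apply: dfy0 => //; apply: contra_neqN rc => /eqP den_r; apply: l_inj.
  exact: psi_den_eq0_uniq (Xl r (ltW r0) (ltW r1)) (Xl c (ltW c0) (ltW c1)) den_r den_c.
apply: (@derive1_eq0_except_eq _ (fy_gap \o l) 0 1 0 ler01 dfy) => r r0 r1 _.
by apply: dfy0 => //; apply/eqP => den_r; apply: no_c; exists r; rewrite ?r0.
Qed.

Lemma expR_lam_psi_strict_concave a b u : Xi a -> Xi b -> b != a -> 0 < u < 1 ->
  u * expR (lam * psi b) + (1 - u) * expR (lam * psi a) <
  expR (lam * psi (u *: b + (1 - u) *: a)).
Proof.
move=> Xa Xb ba u01; have := psi_sconv Xb Xa ba u01.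
set Qm := expR _; set Qb := expR _; set Qa := expR _ => sconv.
have : lam^-1 * (Qm - 1) < lam^-1 * (u * Qb + (1 - u) * Qa - 1).
  suff -> : lam^-1 * (u * Qb + (1 - u) * Qa - 1) =
    u * (lam^-1 * (Qb - 1)) + (1 - u) * (lam^-1 * (Qa - 1)) by [].
  ring.
by rewrite ltr_nM2l ?invr_lt0 // ltrD2r.
Qed.

Lemma psi_sub_lcost_min t e : Theta t -> psi_den (eta_of t) != 0 -> Xi e ->
  0 < lpair t e -> psi (eta_of t) - lcost t (eta_of t) <= psi e - lcost t e.
Proof.
move=> Tt den Xe Lte; have Xa := Xi_eta_of Tt; have Lta := lpair_eta_of_gt0 Tt.
have Ta := theta_ofK Tt; move: (eta_of t) den Xa Lta Ta => a den Xa Lta Ta.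
have [-> //|ea] := eqVneq e a.
rewrite /lcost ler_sub_lam_ln //.
pose Q u := expR (lam * psi (a + u *: (e - a))).
have [Q0 Q1] : Q 0 = expR (lam * psi a) /\ Q 1 = expR (lam * psi e).
  by rewrite /Q scale0r addr0 scale1r addrC subrK.
have dQ : is_derive (0 : R) 1 Q (Q 0 * (lam * ((lpair t a)^-1 * vdot t (e - a)))).
  have Xa0 : Xi (a + 0 *: (e - a)) by rewrite scale0r addr0.
  have := is_derive_comp_grad (differentiable_line a (e - a) 0) (psi_diff Xa0).
  rewrite derive_line scale0r addr0 (grad_psiE den) Ta vdotZl => dpsi.
  exact: is_derive1_comp (is_derive_expR _) (is_deriveZ lam dpsi).
have Qu u : Q u = expR (lam * psi (a + u *: (e - a))) by [].
(* keep [Q] opaque: matching its unfolding against other [expR] terms is very slow *)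
clearbody Q.
have chord u : 0 < u < 1 -> u * (Q 1 - Q 0) <= Q u - Q 0.
  move=> u01; have := expR_lam_psi_strict_concave Xa Xe ea u01.
  have -> : u *: e + (1 - u) *: a = a + u *: (e - a).
    by rewrite scalerBr scalerBl scale1r addrCA addrC -addrA [- _ + _]addrC.
  by rewrite -Qu Q0 Q1 => /ltW; lra.
have Le : lpair t e = lpair t a + lam * vdot t (e - a) by rewrite /lpair vdotBr; ring.
rewrite Le; apply: ler_div_tangent; rewrite -?Le // -Q0 -Q1.
exact: chord_le_derive dQ chord.
Qed.

Lemma fy_gap_eq0 e : Xi e -> fy_gap e = 0.
Proof.
move=> Xe.
(* [psi_den] can vanish only at [eta_of 0], where [psi_sub_lcost_min] is unavailable;
   comparing with [e0] handles that point. *)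
pose e0 := if pselect (Theta 0) is left _ then eta_of 0 else e.
have Xe0 : Xi e0 by rewrite /e0; case: pselect => // T0; exact: Xi_eta_of.
rewrite (fy_gap_const Xe Xe0); apply/eqP; rewrite eq_le fy_gap_ge0 // andbT.
suff : psi e0 <= psi e0 - fy_gap e0 by lra.
have [ub ne] := psi_set_bounded Xe0.
apply: ge_sup => // _ [t [Tt Lte0] <-].
have gapE : fy_gap (eta_of t) = phi t + psi (eta_of t) - lcost t (eta_of t).
  by rewrite /fy_gap theta_ofK.
have := fy_gap_const (Xi_eta_of Tt) Xe0; rewrite gapE => <-.
suff : psi (eta_of t) - lcost t (eta_of t) <= psi e0 - lcost t e0.
  by rewrite /lcost; lra.
have [den0|den] := eqVneq (psi_den (eta_of t)) 0; last exact: psi_sub_lcost_min.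
have t0 : t = 0 by rewrite -(theta_ofK Tt); exact: lgrad_eq0 den0.
by move: Tt; rewrite t0 /e0 => T0; case: pselect.
Qed.

Lemma phi_theta_of e : Xi e -> phi (theta_of e) = lcost (theta_of e) e - psi e.
Proof. by move/fy_gap_eq0/eqP; rewrite subr_eq0 => /eqP <-; rewrite addrK. Qed.

Lemma fenchel_young_lt t b : Theta t -> Xi b -> eta_of t != b -> 0 < lpair t b ->
  lcost t b - phi t < psi b.
Proof.
move=> Tt Xb ab Ltb; have Xa := Xi_eta_of Tt; have Lta := lpair_eta_of_gt0 Tt.
have phit := phi_theta_of Xa; rewrite theta_ofK // in phit.
move: (eta_of t) Xa Lta ab phit => a Xa Lta ab phit; rewrite phit.
suff : psi a - lcost t a < psi b - lcost t b by lra.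
rewrite /lcost ltr_sub_lam_ln // ltNge; apply/negP => le_ab.
(* under [le_ab], strict concavity of [expR (lam * psi)] at the midpoint [m] of [a]
   and [b] contradicts [fenchel_young_le] at [m] *)
pose u : R := 2^-1.
have u01 : 0 < u < 1 by rewrite invr_gt0 invf_lt1 ?ltr0n ?ltr1n.
case/andP: (u01) => u_gt0 u_lt1.
pose m := u *: b + (1 - u) *: a.
have Xm : Xi m by apply: Xi_convex => //; rewrite !ltW.
have Ltm : 0 < lpair t m by rewrite lpair_conv addr_gt0 ?mulr_gt0 ?subr_gt0.
have fy := fenchel_young_le Tt Xm Ltm.
have : psi a - lcost t a <= psi m - lcost t m by lra.
rewrite /lcost ler_sub_lam_ln // lpair_conv => le_ma.
move: le_ma; rewrite leNgt => /negP; apply.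
apply: (ltr_div_conv u01 Lta Ltb le_ab).
by apply: expR_lam_psi_strict_concave; rewrite // eq_sym.
Qed.

Section Sample.
Hypothesis pdens_gt0_common : forall x t t', Theta t -> Theta t' ->
  0 < pdens nu F lam x t -> 0 < pdens nu F lam x t'.
Hypothesis Supp_Xi : forall x, Supp nu F lam x -> Xi (F x).
Variables (n : nat) (xs : 'I_n -> X).
Hypothesis n_gt0 : (0 < n)%N.
Hypothesis xs_Supp : forall i, Supp nu F lam (xs i).
Local Notation y := (fun i => F (xs i)).
Local Notation eta_next t := (\sum_i weight lam y t i *: y i).

Lemma lpair_Supp_gt0 x t : Supp nu F lam x -> Theta t -> 0 < lpair t (F x).
Proof.
case=> t0 Tt0 p0 Tt; have := pdens_gt0_common Tt0 Tt p0.
rewrite /pdens /lam_kernel pmulr_lgt0 ?expR_gt0 // /lpair.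
case: (leP (1 + lam * vdot t (F x)) 0) => // _.
by rewrite powR0 ?invr_eq0 ?lt_eqF // ltxx.
Qed.

Lemma sum_inv_lpair_gt0 t : Theta t -> 0 < \sum_i (lpair t (y i))^-1.
Proof.
by move=> Tt; apply: psumr_gt0 => // i; rewrite invr_gt0 lpair_Supp_gt0.
Qed.

Lemma weight_gt0 t i : Theta t -> 0 < weight lam y t i.
Proof.
move=> Tt; rewrite divr_gt0 ?sum_inv_lpair_gt0 //.
by rewrite invr_gt0 (lpair_Supp_gt0 (xs_Supp i)).
Qed.

Lemma sum_weight t : Theta t -> \sum_i weight lam y t i = 1.
Proof. by move=> Tt; rewrite -mulr_suml divff // gt_eqF ?sum_inv_lpair_gt0. Qed.

Lemma Xi_eta_next t : Theta t -> Xi (eta_next t).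
Proof.
move=> Tt; apply: convex_set_on_sum (sum_weight Tt) _ => // i.
  exact: weight_gt0.
exact: Supp_Xi.
Qed.

Lemma lpair_eta_next_gt0 t s : Theta t -> Theta s -> 0 < lpair s (eta_next t).
Proof.
move=> Tt Ts; rewrite lpair_sum ?sum_weight // psumr_gt0 // => i.
by rewrite mulr_gt0 ?weight_gt0 ?lpair_Supp_gt0.
Qed.

Lemma lpair_eta_next t s : Theta t -> lpair s (eta_next t) =
  (\sum_i lpair s (y i) / lpair t (y i)) / \sum_i (lpair t (y i))^-1.
Proof.
move=> Tt; rewrite lpair_sum ?sum_weight // mulr_suml.
by apply: eq_bigr => i _; rewrite /weight -/(lpair t (y i)); ring.
Qed.

Lemma loglikE t :
  loglik nu F lam y t = lam^-1 * \sum_i ln (lpair t (y i)) - n%:R * phi t.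
Proof. by rewrite /loglik sumrB mulr_sumr sumr_const card_ord mulr_natl. Qed.

Lemma sum_ln_lpair_le_eta_next t : Theta t ->
  \sum_i ln (lpair (theta_of (eta_next t)) (y i)) - \sum_i ln (lpair t (y i)) <=
  n%:R * (ln (lpair (theta_of (eta_next t)) (eta_next t)) - ln (lpair t (eta_next t))).
Proof.
move=> Tt; have Tt' := Theta_theta_of (Xi_eta_next Tt).
move: (theta_of _) Tt' => t' Tt'.
have Lt i := lpair_Supp_gt0 (xs_Supp i) Tt; have Lt' i := lpair_Supp_gt0 (xs_Supp i) Tt'.
have Sc_gt0 := sum_inv_lpair_gt0 Tt.
rewrite -ln_div ?posrE ?lpair_eta_next_gt0 // -sumrB.
have -> : lpair t' (eta_next t) / lpair t (eta_next t) =
    (\sum_i lpair t' (y i) / lpair t (y i)) / n%:R.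
  have n_sum : \sum_i lpair t (y i) / lpair t (y i) = n%:R.
    by rewrite (eq_bigr (fun=> 1)) ?sumr_const ?card_ord // => i _; rewrite divff ?gt_eqF.
  by rewrite !lpair_eta_next // n_sum; field; rewrite !gt_eqF ?ltr0n.
under eq_bigr do rewrite -ln_div ?posrE //.
exact: sum_ln_le_ln_mean (fun i => divr_gt0 (Lt' i) (Lt i)).
Qed.

Lemma loglik_lt_eta_next t : Theta t -> eta_of t <> eta_next t ->
  loglik nu F lam y t < loglik nu F lam y (theta_of (eta_next t)).
Proof.
move=> Tt /eqP eta_ne; have Xe := Xi_eta_next Tt.
have fy := fenchel_young_lt Tt Xe eta_ne (lpair_eta_next_gt0 Tt Tt).
have jensen := sum_ln_lpair_le_eta_next Tt.
rewrite !loglikE (phi_theta_of Xe) /lcost; move: jensen fy; rewrite /lcost.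
(* generalize the atoms, which [lra] would otherwise compare by unfolding [phi], [psi] *)
move: (theta_of (eta_next t)) (psi (eta_next t)) (phi t) => t' ps ph.
move: (eta_next t) => e.
move: (\sum_i ln (lpair t' (y i))) (\sum_i ln (lpair t (y i))) => A' A.
move: (ln (lpair t' e)) (ln (lpair t e)) => l' l jensen fy.
have n_gt0' : 0 < n%:R :> R by rewrite ltr0n.
have lam_inv_lt0 : lam^-1 < 0 by rewrite invr_lt0.
have := ler_wnM2l (ltW lam_inv_lt0) jensen.
have : 0 < n%:R * (ps - (lam^-1 * l - ph)) by rewrite mulr_gt0 ?subr_gt0.
lra.
Qed.

End Sample.
End LambdaDuality.

Theorem theorem1 (R : realType) (d : nat)
  (dX : measure_display) (X : measurableType dX)
  (nu : {measure set X -> \bar R}) (F : X -> 'rV[R]_d) (lam : R)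
  (* standing assumptions *)
  (Hlam : lam < 0)
  (HFmeas : forall i : 'I_d, measurable_fun setT (fun x => F x ord0 i))
  (Hphi_diff : forall t, Theta nu F lam t -> differentiable (phi nu F lam) t)
  (Hphi_den : forall t, Theta nu F lam t ->
     0 < 1 - lam * vdot (grad (phi nu F lam) t) t)
  (Hpsi_fin : forall e, Xi nu F lam e -> has_ubound (psi_set nu F lam e)
                                      /\ psi_set nu F lam e !=set0)
  (Hpsi_diff : forall e, Xi nu F lam e -> differentiable (psi nu F lam) e)
  (Hpsi_sconv : strictly_convex_on (Xi nu F lam)
     (fun e => lam^-1 * (expR (lam * psi nu F lam e) - 1)))
  (Hinv : forall t, Theta nu F lam t ->
     lgrad lam (psi nu F lam) (lgrad lam (phi nu F lam) t) = t)
  (Hdiffeo1 : forall t, Theta nu F lam t ->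
     differentiable (lgrad lam (phi nu F lam)) t)
  (Hdiffeo2 : forall e, Xi nu F lam e ->
     differentiable (lgrad lam (psi nu F lam)) e)
  (HXi_conv : convex_set_on (Xi nu F lam))
  (Hsupp_common : forall x t t', Theta nu F lam t -> Theta nu F lam t' ->
     0 < pdens nu F lam x t -> 0 < pdens nu F lam x t')
  (Hsupp_Xi : forall x, Supp nu F lam x -> Xi nu F lam (F x))
  (* data *)
  (n : nat) (Hn : (0 < n)%N) (xs : 'I_n -> X)
  (Hxs : forall i, Supp nu F lam (xs i))
  (* iteration *)
  (theta eta : nat -> 'rV[R]_d)
  (Htheta0 : Theta nu F lam (theta 0%N))
  (Heta0 : eta 0%N = lgrad lam (phi nu F lam) (theta 0%N))
  (Heta : forall k, eta k.+1 =
     \sum_(i < n) weight lam (fun i => F (xs i)) (theta k) i *: F (xs i))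
  (Htheta : forall k, theta k.+1 = lgrad lam (psi nu F lam) (eta k.+1)) :
  forall k : nat,
    lgrad lam (phi nu F lam) (theta k) <>
      \sum_(i < n) weight lam (fun i => F (xs i)) (theta k) i *: F (xs i) ->
    loglik nu F lam (fun i => F (xs i)) (theta k.+1) >
    loglik nu F lam (fun i => F (xs i)) (theta k).
Proof.
have Theta_theta k : Theta nu F lam (theta k).
  elim: k => [//|k IH]; rewrite Htheta Heta.
  exact: (Theta_theta_of Hinv (Xi_eta_next Hlam HXi_conv Hsupp_common Hsupp_Xi Hn Hxs IH)).
move=> k eta_ne; rewrite Htheta Heta.
exact: (loglik_lt_eta_next Hlam Hphi_diff Hphi_den Hpsi_fin Hpsi_diff Hpsi_sconv Hinv
  Hdiffeo2 HXi_conv Hsupp_common Hsupp_Xi Hn Hxs (Theta_theta k) eta_ne).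
Qed.
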